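(* Let $K=3$ and $r^\star(a)=\mathbb{1}(a=1)$ for $a\in\{1,2,3\}$. For every integer $n>500$ there exists a distribution $\mu$ on ordered pairs of distinct arms such that, if $\mathcal{D}$ consists of $n$ i.i.d. samples generated as in the context, then with probability at least $0.09$ the following holds: the empirical loss $\hat{\mathcal{L}}_{\mathsf{CE}}(\mathcal{D},\cdot)$ has no minimizer on $R_0=\{r\in\mathbb{R}^3: r(3)=0\}$, and for every sequence $(r^{(m)})_{m\ge1}\subset R_0$ with $\hat{\mathcal{L}}_{\mathsf{CE}}(\mathcal{D},r^{(m)})\to\inf_{r\in R_0}\hat{\mathcal{L}}_{\mathsf{CE}}(\mathcal{D},r)$ we have $$\mathcal{L}_{\mathsf{CE}}(r^{(m)})-\mathcal{L}_{\mathsf{CE}}(r^\star)\to+\infty\quad(m\to\infty).$$ (In the paper's phrasing: with probability at least $0.09$, $\mathcal{L}_{\mathsf{CE}}(\hat r_{\mathsf{MLE}})-\mathcal{L}_{\mathsf{CE}}(r^\star)\ge C$ for arbitrarily large $C$.)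
   Context: $K$-armed bandit preference model. Arms are $[K]$, with deterministic ground-truth rewards $r^\star(a)$. Let $\sigma(x)=e^x/(1+e^x)$. A sample $(a,a',y)$ is generated by drawing $(a,a')\sim\mu$ (a distribution on ordered pairs of distinct arms) and then $y\sim\mathrm{Bernoulli}(\sigma(r^\star(a)-r^\star(a')))$, $y=1$ meaning $a$ is preferred to $a'$; the dataset $\mathcal{D}=\{(a_i,a_i',y_i)\}_{i=1}^n$ consists of $n$ i.i.d. samples. Empirical cross-entropy loss: $$\hat{\mathcal{L}}_{\mathsf{CE}}(\mathcal{D},r)=-\frac1n\sum_{i=1}^n\Big[y_i\log\sigma(r(a_i)-r(a_i'))+(1-y_i)\log\sigma(r(a_i')-r(a_i))\Big].$$ Population cross-entropy loss: $$\mathcal{L}_{\mathsf{CE}}(r)=-\mathbb{E}_{(a,a')\sim\mu}\Big[\sigma(r^\star(a)-r^\star(a'))\log\sigma(r(a)-r(a'))+\sigma(r^\star(a')-r^\star(a))\log\sigma(r(a')-r(a))\Big].$$ The MLE $\hat r_{\mathsf{MLE}}$ is the minimizer of the empirical loss normalized by $\hat r(K)=0$. *)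

From HB Require Import structures.
From mathcomp Require Import all_boot all_order all_algebra.
From mathcomp Require Import all_classical all_reals all_analysis.
Set Implicit Arguments. Unset Strict Implicit. Unset Printing Implicit Defensive.
Import Order.TTheory GRing.Theory Num.Theory.
Import numFieldNormedType.Exports.
Local Open Scope classical_set_scope.
Local Open Scope ring_scope.

(* Arms [K] = {1,2,3} are encoded as 'I_3 = {0,1,2}: arm k is ordinal k-1. *)
Definition arm := 'I_3.
Definition sample := (arm * arm * bool)%type.

Section Defs.
Variable R : realType.

Definition sigmoid (x : R) : R := expR x / (1 + expR x).

Definition rstar : arm -> R := fun a => if a == ord0 then 1 else 0.

Definition pair_distr (mu : arm * arm -> R) : Prop :=
  (forall p, 0 <= mu p) /\ (\sum_(p : arm * arm) mu p = 1) /\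
  (forall a : arm, mu (a, a) = 0).

Definition sample_prob (mu : arm * arm -> R) (s : sample) : R :=
  let: (a, a', y) := s in
  mu (a, a') * (if y then sigmoid (rstar a - rstar a')
                else 1 - sigmoid (rstar a - rstar a')).

Definition dataset_prob (n : nat) (mu : arm * arm -> R)
    (E : {ffun 'I_n -> sample} -> Prop) : R :=
  \sum_(D : {ffun 'I_n -> sample} | `[< E D >]) \prod_(i < n) sample_prob mu (D i).

Definition emp_CE (n : nat) (D : {ffun 'I_n -> sample}) (r : arm -> R) : R :=
  - (n%:R)^-1 * \sum_(i < n)
      (let: (a, a', y) := D i in
       (if y then 1 else 0) * ln (sigmoid (r a - r a'))
       + (1 - (if y then 1 else 0)) * ln (sigmoid (r a' - r a))).

Definition pop_CE (mu : arm * arm -> R) (r : arm -> R) : R :=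
  - \sum_(p : arm * arm)
      mu p * (sigmoid (rstar p.1 - rstar p.2) * ln (sigmoid (r p.1 - r p.2))
              + sigmoid (rstar p.2 - rstar p.1) * ln (sigmoid (r p.2 - r p.1))).

Definition R0 : set (arm -> R) := [set r | r ord_max = 0].

End Defs.

From HB Require Import structures.
From mathcomp Require Import all_boot all_order all_algebra.
From mathcomp Require Import all_classical all_reals all_analysis.
From mathcomp Require Import ring lra.
Set Implicit Arguments. Unset Strict Implicit. Unset Printing Implicit Defensive.
Import Order.TTheory GRing.Theory Num.Theory.
Import numFieldNormedType.Exports.
Local Open Scope classical_set_scope.
Local Open Scope ring_scope.

(* Let [mu] put mass [1/n] on the pair (1,2) and the rest on (2,3).  With
   probability at least [sigma(1) - 1/e], at least one comparison of arms
   1 and 2 is observed and all such comparisons favour arm 1.  Then raising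
   [r(1)] always lowers the empirical loss, so there is no minimizer, and any
   minimizing sequence must drive [sigma(r(2) - r(1))] to 0; the population
   loss, which charges the pair (1,2) with weight [sigma(-1)/n] against
   [-ln sigma(r(2) - r(1))], then blows up. *)

Section Sigmoid.
Variable R : realType.
Implicit Types x y : R.

Lemma sigmoid_gt0 x : 0 < sigmoid x.
Proof. by rewrite /sigmoid divr_gt0 // ?addr_gt0 ?expR_gt0. Qed.

Lemma sigmoid_lt1 x : sigmoid x < 1.
Proof. by rewrite /sigmoid ltr_pdivrMr ?addr_gt0 ?expR_gt0 //; lra. Qed.

Lemma sigmoidN x : sigmoid (- x) = 1 - sigmoid x.
Proof.
have ex := expR_gt0 x.
rewrite /sigmoid expRN; field.
by rewrite !gt_eqF ?addr_gt0.
Qed.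

Lemma ltr_sigmoid x y : x < y -> sigmoid x < sigmoid y.
Proof.
move=> xy; have ex := expR_gt0 x; have ey := expR_gt0 y.
have exy : expR x < expR y by rewrite ltr_expR.
rewrite /sigmoid ltr_pdivrMr ?addr_gt0 // mulrAC ltr_pdivlMr ?addr_gt0 //.
nra.
Qed.

Lemma ln_le_subr1 x : 0 < x -> ln x <= x - 1.
Proof. by move=> x0; have := expR_ge1Dx (ln x); rewrite lnK ?posrE //; lra. Qed.

Definition lnsigmoid x := ln (sigmoid x).

Lemma lnsigmoid_le0 x : lnsigmoid x <= 0.
Proof. exact/ln_le0/ltW/sigmoid_lt1. Qed.

Lemma ltr_lnsigmoid x y : x < y -> lnsigmoid x < lnsigmoid y.
Proof. by move=> xy; rewrite /lnsigmoid ltr_ln ?posrE ?sigmoid_gt0 ?ltr_sigmoid. Qed.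

Lemma sigmoidN_le_lnsigmoid x : sigmoid (- x) <= - lnsigmoid x.
Proof.
by rewrite sigmoidN; have := ln_le_subr1 (sigmoid_gt0 x); rewrite /lnsigmoid; lra.
Qed.

(* [ln sigma(-ln d) = -ln(1 + d) >= -d]: the log-likelihood can be pushed
   within [d] of its supremum 0. *)
Lemma lnsigmoid_ge d : 0 < d -> - d <= lnsigmoid (- ln d).
Proof.
move=> d0; rewrite /lnsigmoid /sigmoid expRN lnK ?posrE //.
have -> : d^-1 / (1 + d^-1) = (1 + d)^-1.
  by field; rewrite !gt_eqF ?addr_gt0 ?invr_gt0.
rewrite lnV ?posrE ?addr_gt0 // lerN2.
by have := ln_le_subr1 (addr_gt0 ltr01 d0); lra.
Qed.

End Sigmoid.

Definition a0 : arm := @Ordinal 3 0 isT.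
Definition a1 : arm := @Ordinal 3 1 isT.
Definition a2 : arm := @Ordinal 3 2 isT.
Definition win01 : sample := (a0, a1, true).
Definition win12 : sample := (a1, a2, true).
Definition lose12 : sample := (a1, a2, false).

Section FavourableDataset.
Variables (R : realType) (n : nat) (D : {ffun 'I_n -> sample}).

Lemma emp_CE_ge0 (r : arm -> R) : 0 <= emp_CE D r.
Proof.
rewrite /emp_CE mulNr -mulrN mulr_ge0 // ?invr_ge0 // oppr_ge0.
apply: sumr_le0 => i _; case: (D i) => [[a a'] []];
by have := lnsigmoid_le0 (r a - r a'); have := lnsigmoid_le0 (r a' - r a);
   rewrite /lnsigmoid; lra.
Qed.

Hypothesis D_supp : forall i, D i \in [:: win01; win12; lose12].

Definition nwin01 : R := \sum_(i < n) (D i == win01)%:R.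

Definition bump (r : arm -> R) c : arm -> R :=
  fun a => r a + (if a == a0 then c else 0).

Lemma R0_bump r c : R0 r -> R0 (bump r c).
Proof. by rewrite /R0 /bump /= => ->; rewrite addr0. Qed.

Lemma emp_CE_bump r c :
  emp_CE D (bump r c) = emp_CE D r -
    n%:R^-1 * nwin01 * (lnsigmoid (r a0 - r a1 + c) - lnsigmoid (r a0 - r a1)).
Proof.
set dl := lnsigmoid _ - _; rewrite /emp_CE.
suff -> : \sum_(i < n) (let: (a, a', y) := D i in
      (if y then 1 else 0) * ln (sigmoid (bump r c a - bump r c a'))
      + (1 - (if y then 1 else 0)) * ln (sigmoid (bump r c a' - bump r c a)))
    = \sum_(i < n) (let: (a, a', y) := D i in
      (if y then 1 else 0) * ln (sigmoid (r a - r a'))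
      + (1 - (if y then 1 else 0)) * ln (sigmoid (r a' - r a))) + nwin01 * dl.
  by ring.
rewrite /nwin01 big_distrl -big_split; apply: eq_bigr => i _ /=.
move: (D_supp i); rewrite !inE => /orP[/eqP->|/orP[]/eqP->];
  rewrite /dl /bump /lnsigmoid /= !addr0 ?mul0r ?addr0 //.
by rewrite mul1r (addrAC (r a0)); ring.
Qed.

Hypothesis D_win01 : exists i, D i = win01.

Lemma nwin01_ge1 : 1 <= nwin01.
Proof.
case: D_win01 => i Di; rewrite /nwin01 (bigD1 i) //= Di eqxx lerDl.
exact: sumr_ge0.
Qed.

Hypothesis n_gt0 : (0 < n)%N.

Lemma nwin01_weight_gt0 : 0 < n%:R^-1 * nwin01.
Proof. by rewrite mulr_gt0 ?invr_gt0 ?ltr0n // (lt_le_trans ltr01 nwin01_ge1). Qed.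

Lemma emp_CE_no_min :
  ~ exists r : arm -> R, R0 r /\ forall r', R0 r' -> emp_CE D r <= emp_CE D r'.
Proof.
case=> r [r0 rmin]; have := rmin _ (R0_bump 1 r0); rewrite emp_CE_bump.
have /ltr_lnsigmoid : r a0 - r a1 < r a0 - r a1 + 1 by rewrite ltrDl.
have := nwin01_weight_gt0; set w := _ * nwin01; nra.
Qed.

Let inf_emp := inf [set emp_CE D r | r in @R0 R].

(* Bumping [r(1) - r(2)] to [-ln (e/w)] gets within [e] of the infimum. *)
Lemma emp_CE_gap r : R0 r ->
  n%:R^-1 * - lnsigmoid (r a0 - r a1) <= emp_CE D r - inf_emp.
Proof.
move=> r0; apply/ler_addgt0Pr => e e0.
set t := r a0 - r a1; set w := n%:R^-1 * nwin01.
have w0 : 0 < w := nwin01_weight_gt0.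
have d0 : 0 < e / w by rewrite divr_gt0.
have inf_le : inf_emp <= emp_CE D (bump r (- ln (e / w) - t)).
  by apply: ge_inf; [exists 0 => _ [r' _ <-]; exact: emp_CE_ge0
                    | exists (bump r (- ln (e / w) - t)) => //; exact: R0_bump].
rewrite emp_CE_bump -/t -/w (_ : t + _ = - ln (e / w)) in inf_le; last by ring.
have close : - e <= w * lnsigmoid (- ln (e / w)).
  have := ler_wpM2l (ltW w0) (lnsigmoid_ge d0).
  by rewrite mulrN mulrCA divff ?mulr1 // gt_eqF.
have nwin : n%:R^-1 * - lnsigmoid t <= w * - lnsigmoid t.
  by rewrite ler_wpM2r ?oppr_ge0 ?lnsigmoid_le0 // /w ler_peMr ?nwin01_ge1.
move: close nwin; rewrite !mulrN; lra.
Qed.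

Lemma sigmoid_le_emp_CE_gap r : R0 r ->
  sigmoid (r a1 - r a0) <= n%:R * (emp_CE D r - inf_emp).
Proof.
move=> r0; rewrite -ler_pdivrMl ?ltr0n // -opprB.
exact: le_trans (ler_wpM2l _ (sigmoidN_le_lnsigmoid _)) (emp_CE_gap r0).
Qed.

Variable mu : arm * arm -> R.
Hypotheses (mu_ge0 : forall p, 0 <= mu p) (mu01_gt0 : 0 < mu (a0, a1)).

(* Only the term of the pair (1,2) is kept; it carries the label probability
   [sigma(r*(2) - r*(1)) = sigma(-1)] in front of [-ln sigma(r(2) - r(1))]. *)
Lemma pop_CE_ge r :
  mu (a0, a1) * sigmoid (-1) * - lnsigmoid (r a1 - r a0) <= pop_CE mu r.
Proof.
have sig_ln_le0 (u v : R) : sigmoid u * lnsigmoid v <= 0.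
  by rewrite mulr_ge0_le0 ?lnsigmoid_le0 // ltW ?sigmoid_gt0.
rewrite /pop_CE -sumrN (bigD1 (a0, a1)) //=; apply: ler_wpDr.
- apply: sumr_ge0 => p _; rewrite oppr_ge0 mulr_ge0_le0 //.
  by have := sig_ln_le0 (rstar R p.1 - rstar R p.2) (r p.1 - r p.2);
     have := sig_ln_le0 (rstar R p.2 - rstar R p.1) (r p.2 - r p.1);
     rewrite /lnsigmoid; lra.
- rewrite /rstar /= subr0 sub0r.
  have := mulr_ge0_le0 (mu_ge0 (a0, a1)) (sig_ln_le0 1 (r a0 - r a1)).
  by rewrite /lnsigmoid; lra.
Qed.

Lemma pop_CE_excess_cvgy (rs : nat -> arm -> R) :
  (forall m, R0 (rs m)) ->
  (fun m => emp_CE D (rs m)) @ \oo --> inf_emp ->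
  (fun m => pop_CE mu (rs m) - pop_CE mu (rstar R)) @ \oo --> +oo.
Proof.
move=> rs_R0 emp_cvg.
set c := mu (a0, a1) * sigmoid (-1).
have c0 : 0 < c by rewrite mulr_gt0 ?sigmoid_gt0.
have nR : 0 < n%:R :> R by rewrite ltr0n.
apply/cvgryPge => A; set B := (A + pop_CE mu (rstar R)) / c.
have eps0 : 0 < expR (- B) / n%:R by rewrite divr_gt0 ?expR_gt0.
move/cvgr_dist_lt: emp_cvg => /(_ _ eps0); apply: filterS => m emp_close /=.
set t := rs m a1 - rs m a0.
have sig_small : sigmoid t < expR (- B).
  apply: le_lt_trans (sigmoid_le_emp_CE_gap (rs_R0 m)) _.
  rewrite -ltr_pdivlMl // mulrC.
  by apply: le_lt_trans emp_close; rewrite distrC ler_norm.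
have ln_small : B < - lnsigmoid t.
  by rewrite ltrNr -(expRK (- B)) ltr_ln ?posrE ?sigmoid_gt0 ?expR_gt0.
move: ln_small; rewrite -(ltr_pM2l c0) /B mulrCA divff ?mulr1 ?gt_eqF //.
by have := pop_CE_ge (rs m); rewrite -/c -/t; lra.
Qed.

End FavourableDataset.

Section DatasetProbability.
Variables (R : realType) (mu : arm * arm -> R).
Hypothesis mu_ge0 : forall p, 0 <= mu p.

Lemma sample_prob_ge0 s : 0 <= sample_prob mu s.
Proof.
case: s => [[a a'] y] /=; rewrite mulr_ge0 //.
by case: y; rewrite ?subr_ge0 ltW ?sigmoid_gt0 ?sigmoid_lt1.
Qed.

Definition sample_prob_in (A : seq sample) s : R :=
  if s \in A then sample_prob mu s else 0.

Lemma prod_sample_prob_in n A (D : {ffun 'I_n -> sample}) :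
  \prod_i sample_prob_in A (D i) =
    if [forall i, D i \in A] then \prod_i sample_prob mu (D i) else 0.
Proof.
case: ifP => [/forallP DA | /negbT]; first by apply: eq_bigr => i _; rewrite /sample_prob_in DA.
by rewrite negb_forall => /existsP[i Di]; rewrite (bigD1 i) //= /sample_prob_in (negbTE Di) mul0r.
Qed.

(* [(sum_s w_A s)^n] is the probability that all [n] samples fall in [A]. *)
Lemma dataset_prob_ge n (E : {ffun 'I_n -> sample} -> Prop) (A B : seq sample) :
  (forall D : {ffun 'I_n -> sample},
     (forall i, D i \in A) -> ~ (forall i, D i \in B) -> E D) ->
  (\sum_s sample_prob_in A s) ^+ n - (\sum_s sample_prob_in B s) ^+ n
    <= dataset_prob mu E.
Proof.
move=> AnotB_E; have pow_prod (x : R) : x ^+ n = \prod_(i < n) x.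
  by rewrite prodr_const card_ord.
rewrite !pow_prod !bigA_distr_bigA /=.
rewrite -sumrB /dataset_prob [X in _ <= X]big_mkcond; apply: ler_sum => D _ /=.
rewrite !prod_sample_prob_in.
have prod_ge0 : 0 <= \prod_i sample_prob mu (D i).
  by apply: prodr_ge0 => i _; exact: sample_prob_ge0.
case: ifP => [/forallP DA | _]; case: ifP => [/forallP DB | /negbT notDB];
  case: asboolP => // notE; rewrite ?subrr ?sub0r ?subr0 ?oppr_le0 //; try lra.
exfalso; apply: notE; apply: AnotB_E => // DB.
by move: notDB; rewrite negb_forall => /existsP[i]; rewrite DB.
Qed.

End DatasetProbability.

Lemma bernoulli_ineq (R : realFieldType) (x : R) m :
  x <= 1 -> 1 - m%:R * x <= (1 - x) ^+ m.
Proof.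
move=> x_le1; elim: m => [|m IH]; first by rewrite mul0r subr0 expr0.
have : (1 - x) * (1 - m%:R * x) <= (1 - x) ^+ m.+1.
  by rewrite exprS ler_wpM2l ?subr_ge0.
have : 0 <= m%:R * x * x by rewrite -mulrA -expr2 mulr_ge0 ?sqr_ge0.
rewrite -natr1; nra.
Qed.

(* [(1 - (1 - sigma 1)/n)^n >= sigma 1 >= 2/3] and [(1 - 1/n)^n <= 1/e <= 1/2]. *)
Lemma win_prob_ge (R : realType) n : (0 < n)%N ->
  9 / 100 <= (n%:R^-1 * sigmoid 1 + (1 - n%:R^-1)) ^+ n - (1 - n%:R^-1) ^+ n :> R.
Proof.
move=> n0; have nR : 0 < n%:R :> R by rewrite ltr0n.
set q := n%:R^-1; have q0 : 0 < q by rewrite invr_gt0.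
have nq : n%:R * q = 1 by rewrite divff ?gt_eqF.
have e_ge2 : 2 <= expR (1 : R) by have := @expR_ge1Dx R 1; lra.
have sig1 : 2 / 3 <= sigmoid (1 : R).
  by rewrite /sigmoid ler_pdivlMr ?addr_gt0 ?expR_gt0 //; lra.
have q_le1 : q <= 1 by rewrite invr_le1 ?unitfE ?gt_eqF // ler1n.
have some_win : sigmoid 1 <= (q * sigmoid 1 + (1 - q)) ^+ n.
  have -> : q * sigmoid 1 + (1 - q) = 1 - q * (1 - sigmoid 1) by ring.
  apply: le_trans (bernoulli_ineq _ _); first by rewrite mulrA nq; lra.
  by have := sigmoid_gt0 (1 : R); have := sigmoid_lt1 (1 : R); nra.
have no_cmp : (1 - q) ^+ n <= expR (-1).
  have -> : expR (-1) = expR (- q) ^+ n by rewrite -expRM_natl mulrN nq.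
  by apply: lerXn2r; rewrite ?nnegrE ?expR_ge1Dx ?expR_ge0 ?subr_ge0.
have : expR (-1) <= 1 / 2 :> R by rewrite expRN mul1r lef_pV2 ?posrE ?expR_gt0.
lra.
Qed.

Definition mu_rare01 (R : realType) (q : R) (p : arm * arm) : R :=
  if p == (a0, a1) then q else if p == (a1, a2) then 1 - q else 0.

Lemma mu_rare01_pair_distr (R : realType) (q : R) :
  0 <= q <= 1 -> pair_distr (mu_rare01 q).
Proof.
move=> /andP[q0 q1]; split; [|split].
- by move=> p; rewrite /mu_rare01; case: ifP => // _; case: ifP; rewrite ?subr_ge0.
- rewrite (bigD1 (a0, a1)) //= (bigD1 (a1, a2)) //= big1 /mu_rare01 /=.
    by rewrite addr0 addrC subrK.
  by move=> p /andP[/negbTE-> /negbTE->].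
- by move=> a; rewrite /mu_rare01; case: a => -[|[|[|k]]].
Qed.

Lemma sum_sample_prob_supp (R : realType) (q : R) :
  \sum_s sample_prob_in (mu_rare01 q) [:: win01; win12; lose12] s
    = q * sigmoid 1 + (1 - q).
Proof.
rewrite /sample_prob_in -big_mkcond -big_uniq //= !big_cons big_nil.
by rewrite /sample_prob /mu_rare01 /rstar /= subr0; ring.
Qed.

Lemma sum_sample_prob_pair12 (R : realType) (q : R) :
  \sum_s sample_prob_in (mu_rare01 q) [:: win12; lose12] s = 1 - q.
Proof.
rewrite /sample_prob_in -big_mkcond -big_uniq //= !big_cons big_nil.
by rewrite /sample_prob /mu_rare01 /rstar /=; ring.
Qed.

(* The argument needs only [0 < n]. *)
Theorem theorem2 (R : realType) (n : nat) (hn : (500 < n)%N) :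
  exists mu : arm * arm -> R,
    pair_distr mu /\
    @dataset_prob R n mu (fun D =>
      (~ exists r : arm -> R, R0 r /\ forall r', R0 r' -> emp_CE D r <= emp_CE D r') /\
      (forall rs : nat -> (arm -> R),
         (forall m, R0 (rs m)) ->
         (fun m => emp_CE D (rs m)) @ \oo --> inf [set emp_CE D r | r in @R0 R] ->
         (fun m => pop_CE mu (rs m) - pop_CE mu (@rstar R)) @ \oo --> +oo))
    >= 9 / 100.
Proof.
have n0 : (0 < n)%N by apply: leq_trans hn.
have nR : 0 < n%:R :> R by rewrite ltr0n.
have q01 : 0 <= (n%:R^-1 : R) <= 1.
  by rewrite invr_ge0 ltW //= invr_le1 ?unitfE ?gt_eqF // ler1n.
have [mu_ge0 _] := mu_rare01_pair_distr q01.
exists (mu_rare01 n%:R^-1); split; first exact: mu_rare01_pair_distr.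
apply: le_trans (win_prob_ge R n0) _.
rewrite -sum_sample_prob_supp -sum_sample_prob_pair12.
apply: dataset_prob_ge => // D D_supp D_not12.
have D_win01 : exists i, D i = win01.
  have [i Di] : exists i, D i \notin [:: win12; lose12].
    by apply/existsP; rewrite -negb_forall; apply/forallP => D12; apply: D_not12.
  by exists i; move: (D_supp i) Di; rewrite !inE => /orP[/eqP|->].
have mu01_gt0 : 0 < mu_rare01 n%:R^-1 (a0, a1) :> R by rewrite /mu_rare01 /= invr_gt0.
by split; [exact: emp_CE_no_min | exact: pop_CE_excess_cvgy].
Qed.
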